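(* In the setting of the context, let $1\le i<j\le m$ be integers and $p',q$ arbitrary integers. Then $|s_i^{p'}s_j^{q}|_{S_m}=|p'|+|q|$.
   Context: $H$ is a finitely presented group with finite generating set $T$, containing a free subgroup $F$ of rank $p$ with free basis $\{d_1,\dots,d_p\}\subset T$ (standing assumption: $\mathrm{Dist}_F^H$ admits an exponentially bounded sequence of palindromic certificates in $F$). $F_x,F_y,F_z$ are free of rank $p$ with bases $R_x=\{x_i\},R_y=\{y_i\},R_z=\{z_i\}$. $G_1=[H\ast_{\langle d_i=x_iy_i^{-1}\rangle}(F_x\times F_y\times F_z)]\times\langle s_1\rangle$; $a_i=x_iz_i$, $b_i=y_iz_i$, $R_{xz}=\{a_i\}$, $R_{yz}=\{b_i\}$; $G_2=\langle G_1,s_2\mid s_2^{-1}a_is_2=b_i,\ 1\le i\le p\rangle$; $G_k=\langle G_{k-1},s_k\mid s_k^{-1}s_1s_k=s_{k-1}\rangle$ for $k\ge3$. $S_1=T\cup R_x\cup R_y\cup R_z\cup R_{xz}\cup R_{yz}\cup\{s_1\}$, $S_k=S_{k-1}\cup\{s_k\}$; $|\cdot|_{S_m}$ is word length in $G_m$. *)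

From mathcomp Require Import all_boot all_algebra.
Set Implicit Arguments. Unset Strict Implicit. Unset Printing Implicit Defensive.

(* A letter is a generator with an exponent flag: (g,false) = g, (g,true) = g^-1. *)
Definition letter (A : Type) := (A * bool)%type.
Definition word (A : Type) := seq (letter A).

Inductive weq (A : Type) (R : word A -> Prop) : word A -> word A -> Prop :=
| weq_refl w : weq R w w
| weq_sym u v : weq R u v -> weq R v u
| weq_trans u v w : weq R u v -> weq R v w -> weq R u w
| weq_free (u v : word A) (g : A) (b : bool) :
    weq R (u ++ (g, b) :: (g, ~~ b) :: v) (u ++ v)
| weq_rel (u v r : word A) : R r -> weq R (u ++ r ++ v) (u ++ v).

Definition is_word_length (A : Type) (R : word A -> Prop) (w : word A) (n : nat) :=
  (exists u : word A, weq R u w /\ size u = n) /\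
  (forall u : word A, weq R u w -> n <= size u).

Definition freely_reduced (A : Type) (w : word A) :=
  forall (u v : word A) (a : A) (b : bool), w <> u ++ (a, b) :: (a, ~~ b) :: v.

Definition pw (A : Type) (g : A) (k : int) : word A := nseq `|k|%N (g, (k < 0)%R).

Definition relH (T : finType) (RH : seq (word T)) : word T -> Prop :=
  fun r => r \in RH.

Definition free_basis (T : finType) (RH : seq (word T)) (p : nat) (d : 'I_p -> T) :=
  forall w : word 'I_p, freely_reduced w ->
    weq (relH RH) [seq (d l.1, l.2) | l <- w] [::] -> w = [::].

(* Generating set S_m of G_m:  T, x_i, y_i, z_i, a_i, b_i (i : 'I_p), and
   s_k for k : 'I_m, where the ordinal k stands for s_{k+1}. *)
Inductive gen (T : Type) (p m : nat) : Type :=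
| GT of T
| GX of 'I_p | GY of 'I_p | GZ of 'I_p
| GA of 'I_p | GB of 'I_p
| GS of 'I_m.

Definition lt (T : Type) (p m : nat) (g : gen T p m) : letter (gen T p m) := (g, false).
Definition lti (T : Type) (p m : nat) (g : gen T p m) : letter (gen T p m) := (g, true).

Definition commw (X : Type) (g h : X) : word X :=
  [:: (g, true); (h, true); (g, false); (h, false)].

Inductive relG (T : finType) (RH : seq (word T)) (p : nat) (d : 'I_p -> T) (m : nat)
  : word (gen T p m) -> Prop :=
| relG_H r : r \in RH -> relG RH d [seq (GT p m l.1, l.2) | l <- r]
(* amalgamation d_i = x_i y_i^-1 *)
| relG_amalg i : relG RH d [:: lt (GT p m (d i)); lt (GY T m i); lti (GX T m i)]
(* F_x x F_y x F_z *)
| relG_xy i j : relG RH d (commw (GX T m i) (GY T m j))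
| relG_xz i j : relG RH d (commw (GX T m i) (GZ T m j))
| relG_yz i j : relG RH d (commw (GY T m i) (GZ T m j))
(* the free products F_x, F_y, F_z need no relators *)
(* a_i = x_i z_i, b_i = y_i z_i *)
| relG_a i : relG RH d [:: lt (GA T m i); lti (GZ T m i); lti (GX T m i)]
| relG_b i : relG RH d [:: lt (GB T m i); lti (GZ T m i); lti (GY T m i)]
(* s_1 is central in G_1 (direct factor) *)
| relG_s1T (k : 'I_m) t : val k = 0 -> relG RH d (commw (GS T p k) (GT p m t))
| relG_s1X (k : 'I_m) i : val k = 0 -> relG RH d (commw (GS T p k) (GX T m i))
| relG_s1Y (k : 'I_m) i : val k = 0 -> relG RH d (commw (GS T p k) (GY T m i))
| relG_s1Z (k : 'I_m) i : val k = 0 -> relG RH d (commw (GS T p k) (GZ T m i))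
| relG_s1A (k : 'I_m) i : val k = 0 -> relG RH d (commw (GS T p k) (GA T m i))
| relG_s1B (k : 'I_m) i : val k = 0 -> relG RH d (commw (GS T p k) (GB T m i))
(* G_2: s_2^-1 a_i s_2 = b_i *)
| relG_s2 (k : 'I_m) i : val k = 1 ->
    relG RH d [:: lti (GS T p k); lt (GA T m i); lt (GS T p k); lti (GB T m i)]
(* G_k, k >= 3: s_k^-1 s_1 s_k = s_{k-1} *)
| relG_sk (k k1 k0 : 'I_m) : 2 <= val k -> val k0 = 0 -> val k1 = (val k).-1 ->
    relG RH d [:: lti (GS T p k); lt (GS T p k0); lt (GS T p k); lti (GS T p k1)].

(* The word s_i^p' s_j^q itself gives the upper bound.  For the lower bound,
   a word representing it is pushed, without increasing its length, into
   smaller and smaller groups generated by the s's.  Erasing all other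
   generators maps G_m onto Q_m = < s_1, ..., s_m | s_k^-1 s_1 s_k = s_(k-1),
   3 <= k <= m >, since the remaining relators of G_m become freely trivial.
   Q_(k+1) is an HNN extension of Q_k with stable letter s_(k+1), hence maps
   into the wreath product Q_k wr Z; the coordinate at 0 of the image is a
   length non-increasing map Q_(k+1) -> Q_k that fixes words in s_1, ..., s_k.
   Having descended to Q_j, the exponent sums of s_1, ..., s_(j-1) and of s_j
   are homomorphisms to Z taking the values p' and q, and a word of length n
   has |e_1| + |e_2| <= n. *)

From mathcomp Require Import all_boot all_algebra.
From mathcomp Require Import zify ring.
Set Implicit Arguments. Unset Strict Implicit. Unset Printing Implicit Defensive.
Import GRing.Theory.
Local Open Scope ring_scope.

Section Words.
Variables (A : Type) (R : word A -> Prop).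

Definition invl (l : letter A) : letter A := (l.1, ~~ l.2).
Definition winv (w : word A) : word A := rev (map invl w).

Lemma winv_cons l w : winv (l :: w) = winv w ++ [:: invl l].
Proof. by rewrite /winv /= rev_cons cats1. Qed.

Lemma winvK : involutive winv.
Proof.
move=> w; rewrite /winv map_rev revK -map_comp.
by elim: w => //= [[g b] w ->]; rewrite /invl /= negbK.
Qed.

Lemma size_winv w : size (winv w) = size w.
Proof. by rewrite size_rev size_map. Qed.

Lemma weq_cat2 a b u v : weq R u v -> weq R (a ++ u ++ b) (a ++ v ++ b).
Proof.
elim=> {u v} [w|u v _ IH|u v w _ IH1 _ IH2|u v g c|u v r Rr].
- exact: weq_refl.
- exact: weq_sym.
- exact: weq_trans IH2.
- by have := weq_free R (a ++ u) (v ++ b) g c; rewrite -!catA.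
- by have := weq_rel (a ++ u) (v ++ b) Rr; rewrite -!catA.
Qed.

Lemma weq_catl a u v : weq R u v -> weq R (a ++ u) (a ++ v).
Proof. by move=> /(weq_cat2 a [::]); rewrite !cats0. Qed.

Lemma weq_mulVKw w v : weq R (w ++ winv w ++ v) v.
Proof.
elim: w v => [|[g c] w IH] v /=; first exact: weq_refl.
rewrite winv_cons -catA /=; apply: weq_trans (weq_free R [::] v g c).
by have := weq_cat2 [:: (g, c)] [::] (IH ((g, ~~ c) :: v)); rewrite !cats0.
Qed.

Lemma weq_mulKw w v : weq R (winv w ++ w ++ v) v.
Proof. by have := weq_mulVKw (winv w) v; rewrite winvK. Qed.

Lemma weq_conj_trivial x y : [\/ x = [::], y = [::] | x = y] ->
  weq R (winv x ++ y ++ x ++ winv y) [::].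
Proof.
case=> ->; rewrite ?cats0.
- by have := weq_mulVKw y [::]; rewrite cats0.
- by have := weq_mulKw x [::]; rewrite cats0.
- by apply: weq_trans (weq_mulKw y _) _; have := weq_mulVKw y [::]; rewrite cats0.
Qed.

End Words.

Section TwistedSubst.
Variables (A B : Type) (delta : A -> int) (sigma : int -> A -> word B).

Definition letter_deg (l : letter A) : int := if l.2 then - delta l.1 else delta l.1.
Definition word_deg (w : word A) : int := \sum_(l <- w) letter_deg l.

(* [twisted_subst h w] is the coordinate at [h] of the image of [w] in the
   unrestricted wreath product (words over B) wr Z, where the letter [g] is the
   pair (function [sigma _ g], shift [delta g]). *)
Definition twisted_letter (h : int) (l : letter A) : word B :=
  if l.2 then winv (sigma (h - delta l.1) l.1) else sigma h l.1.

Fixpoint twisted_subst (h : int) (w : word A) : word B :=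
  if w is l :: w' then twisted_letter h l ++ twisted_subst (h + letter_deg l) w'
  else [::].

Lemma word_deg_cons l w : word_deg (l :: w) = letter_deg l + word_deg w.
Proof. exact: big_cons. Qed.

Lemma word_deg_cat u v : word_deg (u ++ v) = word_deg u + word_deg v.
Proof. exact: big_cat. Qed.

Lemma word_deg_pw g k : word_deg (pw g k) = k * delta g.
Proof.
rewrite /word_deg big_nseq iter_addr_0 /letter_deg /=.
case: k => n /=; first by rewrite -mulr_natl natz.
by rewrite NegzE mulNrn -mulr_natl natz mulNr.
Qed.

Lemma twisted_subst_cat h u v :
  twisted_subst h (u ++ v) = twisted_subst h u ++ twisted_subst (h + word_deg u) v.
Proof.
elim: u h => [|l u IH] h /=; first by rewrite /word_deg big_nil addr0.
by rewrite IH catA word_deg_cons addrA.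
Qed.

Lemma size_twisted_subst h w : (forall h g, (size (sigma h g) <= 1)%N) ->
  (size (twisted_subst h w) <= size w)%N.
Proof.
move=> sigma_le1; elim: w h => [|l w IH] h //=.
rewrite size_cat -addn1 addnC leq_add //.
by rewrite /twisted_letter; case: l.2; rewrite ?size_winv sigma_le1.
Qed.

Section Presentations.
Variables (R : word A -> Prop) (R' : word B -> Prop).
Hypothesis deg_rel : forall r, R r -> word_deg r = 0.

Lemma weq_word_deg u v : weq R u v -> word_deg u = word_deg v.
Proof.
elim=> {u v} [//|u v _ -> //|u v w _ -> _ -> //|u v g c|u v r Rr].
  rewrite !word_deg_cat !word_deg_cons /letter_deg /=.
  by case: c; rewrite /= ?addKr ?addNKr.
by rewrite !word_deg_cat (deg_rel Rr) add0r.
Qed.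

Hypothesis subst_rel : forall r h, R r -> weq R' (twisted_subst h r) [::].

Lemma weq_twisted_subst u v h : weq R u v -> weq R' (twisted_subst h u) (twisted_subst h v).
Proof.
move=> uv; elim: uv h => {u v} [w|u v _ IH|u v w _ IH1 _ IH2|u v g c|u v r Rr] h.
- exact: weq_refl.
- exact: weq_sym.
- exact: weq_trans (IH2 h).
- rewrite !twisted_subst_cat /=; apply: weq_catl.
  rewrite /twisted_letter /letter_deg /=; case: c => /=.
    by rewrite subrK; apply: weq_mulKw.
  by rewrite addrK; apply: weq_mulVKw.
- rewrite !twisted_subst_cat (deg_rel Rr) addr0.
  by have := weq_cat2 (twisted_subst h u) (twisted_subst (h + word_deg u) v)
    (subst_rel (h + word_deg u) Rr).
Qed.

End Presentations.
End TwistedSubst.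

Lemma twisted_subst_pw (A : Type) (delta : A -> int) (sigma : int -> A -> word A) h g k :
  delta g = 0 -> sigma h g = [:: (g, false)] ->
  twisted_subst delta sigma h (pw g k) = pw g k.
Proof.
move=> dg0 sg; rewrite /pw; elim: `|k|%N => //= n IH.
rewrite /letter_deg /twisted_letter /= dg0 oppr0 if_same addr0 ?subr0 IH sg.
by case: (k < 0).
Qed.

Lemma word_deg_norm_le (A : Type) (delta1 delta2 : A -> int) (w : word A) :
  (forall g, `|delta1 g| + `|delta2 g| <= 1) ->
  `|word_deg delta1 w| + `|word_deg delta2 w| <= (size w)%:Z.
Proof.
move=> le1; elim: w => [|[g b] w IH]; first by rewrite /word_deg !big_nil.
rewrite !word_deg_cons /letter_deg /=.
have := le1 g; case: b; lia.
Qed.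

Lemma word_deg0 (A : Type) (w : word A) : word_deg (fun=> 0) w = 0.
Proof. by apply: big1 => l _; rewrite /letter_deg oppr0 if_same. Qed.

Section SRelators.
Variables (T : Type) (p m : nat).
Local Notation G := (gen T p m).
Local Notation s := (GS T p).

Definition sconj_rel (k k0 k1 : 'I_m) : word G :=
  [:: lti (s k); lt (s k0); lt (s k); lti (s k1)].

(* With 0-based indices, [relS K] consists of the relators s_k^-1 s_0 s_k s_(k-1)^-1
   for 2 <= k < K, i.e. the relations of G_3, ..., G_K among the s's. *)
Definition relS (K : nat) (r : word G) : Prop :=
  exists k k0 k1 : 'I_m,
    [/\ (2 <= k < K)%N, k0 = 0%N :> nat, k1 = k.-1 :> nat & r = sconj_rel k k0 k1].

Definition sweight (P : pred nat) (g : G) : int := if g is GS a then (P a : nat)%:Z else 0.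

Lemma word_deg_sconj_rel P k k0 k1 :
  word_deg (sweight P) (sconj_rel k k0 k1) = (P k0 : nat)%:Z - (P k1 : nat)%:Z.
Proof. rewrite !word_deg_cons /word_deg big_nil /letter_deg /=; ring. Qed.

Lemma word_deg_relS P K : (forall k, (2 <= k < K)%N -> P 0%N = P k.-1) ->
  forall r, relS K r -> word_deg (sweight P) r = 0.
Proof.
move=> PE r [k [k0 [k1 [/PE + k0E k1E ->]]]].
by rewrite word_deg_sconj_rel k0E k1E => ->; rewrite subrr.
Qed.

Definition sproj_subst (h : int) (g : G) : word G :=
  if g is GS a then [:: lt (s a)] else [::].

Definition sproj : word G -> word G := twisted_subst (fun=> 0) sproj_subst 0.

Lemma size_sproj w : (size (sproj w) <= size w)%N.
Proof. by apply: size_twisted_subst => h []. Qed.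

Lemma sproj_pw_cat (a b : 'I_m) k l :
  sproj (pw (s a) k ++ pw (s b) l) = pw (s a) k ++ pw (s b) l.
Proof. by rewrite /sproj twisted_subst_cat word_deg0 addr0 !twisted_subst_pw. Qed.

Section Retract.
Variables (t : nat) (s0 st1 : 'I_m).

(* [relS t.+1] presents an HNN extension of the group of [relS t], with stable
   letter s_t conjugating s_0 to s_(t-1).  At each height h, [retract_subst h]
   is an endomorphism of the group of [relS t]: a retraction onto
   <s_0, ..., s_(t-1)> at 0, a map onto <s_(t-1)> at -1, onto <s_0> at 1, and
   trivial elsewhere; [retract_subst_hnn] is the compatibility that lets s_t
   act as the shift of the wreath product. *)
Definition retract_subst (h : int) (g : G) : word G :=
  if g is GS a then
    if (a < t)%N then
      if h == 0 then [:: lt (s a)]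
      else if h == -1 then (if a == t.-1 :> nat then [::] else [:: lt (s st1)])
      else if h == 1 then (if a == t.-1 :> nat then [:: lt (s s0)] else [::])
      else [::]
    else [::]
  else [::].

Arguments retract_subst : simpl never.

Definition retract : word G -> word G := twisted_subst (sweight (pred1 t)) retract_subst 0.

Lemma size_retract w : (size (retract w) <= size w)%N.
Proof.
apply: size_twisted_subst => h g; rewrite /retract_subst.
by case: g => // a; repeat case: ifP.
Qed.

Lemma retract_pw_cat (a b : 'I_m) k l : (a < t)%N -> (b < t)%N ->
  retract (pw (s a) k ++ pw (s b) l) = pw (s a) k ++ pw (s b) l.
Proof.
move=> at_ bt; have neq_t (c : 'I_m) : (c < t)%N -> sweight (pred1 t) (s c) = 0.
  by move=> ct; rewrite /sweight /= ltn_eqF.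
rewrite /retract twisted_subst_cat word_deg_pw neq_t // mulr0 addr0.
by rewrite !twisted_subst_pw ?neq_t // /retract_subst ?at_ ?bt.
Qed.

Hypotheses (s0E : s0 = 0%N :> nat) (st1E : st1 = t.-1 :> nat) (t_ge2 : (2 <= t)%N).

Lemma retract_subst_hnn h : retract_subst (h - 1) (s s0) = retract_subst h (s st1).
Proof.
rewrite /retract_subst s0E st1E.
have -> : (0 < t)%N by lia.
have -> : (t.-1 < t)%N by lia.
have -> : (0 == t.-1)%N = false by lia.
by repeat case: eqP => // ?; lia.
Qed.

Lemma retract_subst_neq0 h (a : 'I_m) : h != 0 -> (a < t)%N -> a != t.-1 :> nat ->
  retract_subst h (s a) = if h == -1 then [:: lt (s st1)] else [::].
Proof.
move=> /negPf h0 at_ /negPf a_t1; rewrite /retract_subst at_ h0 a_t1.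
by case: (h == -1); case: (h == 1).
Qed.

Lemma retract_subst_rel r h : relS t.+1 r ->
  weq (relS t) (twisted_subst (sweight (pred1 t)) retract_subst h r) [::].
Proof.
case=> k [k0 [k1 [/andP[k_ge2 k_le] k0E k1E ->]]].
have k0_t : (k0 == t :> nat) = false by rewrite k0E; lia.
have k1_t : (k1 == t :> nat) = false by rewrite k1E; lia.
rewrite /= /twisted_letter /letter_deg /sweight /= k0_t k1_t.
have [k_t|k_t] := eqVneq (k : nat) t; rewrite /= ?cats0 ?addr0 ?subr0.
  have -> : retract_subst (h - 1) (s k) = [::] by rewrite /retract_subst k_t ltnn.
  have -> : k0 = s0 by apply: val_inj; rewrite /= k0E s0E.
  have -> : k1 = st1 by apply: val_inj; rewrite /= k1E st1E k_t.
  rewrite subrK retract_subst_hnn /=.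
  by have := weq_mulVKw (relS t) (retract_subst h (s st1)) [::]; rewrite cats0.
have k_lt : (k < t)%N by rewrite ltn_neqAle k_t -ltnS.
have k0_lt : (k0 < t)%N by rewrite k0E; lia.
have k1_lt : (k1 < t)%N by rewrite k1E; lia.
have [->|h0] := eqVneq h 0.
  rewrite /retract_subst k_lt k0_lt k1_lt eqxx /=.
  have rel_k : relS t (sconj_rel k k0 k1) by exists k, k0, k1; rewrite k_ge2 k_lt.
  by have := weq_rel [::] [::] rel_k; rewrite cats0.
have k0_t1 : (k0 != t.-1 :> nat) by rewrite k0E; lia.
have k1_t1 : (k1 != t.-1 :> nat) by rewrite k1E; lia.
rewrite (retract_subst_neq0 h0 k0_lt k0_t1) (retract_subst_neq0 h0 k1_lt k1_t1).
apply: weq_conj_trivial.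
have [k_t1|k_t1] := eqVneq (k : nat) t.-1.
  rewrite /retract_subst k_lt (negPf h0) k_t1 eqxx.
  by case: (h == -1); [constructor 1 | constructor 2].
by rewrite retract_subst_neq0 //; constructor 3.
Qed.

Lemma weq_retract u v : weq (relS t.+1) u v -> weq (relS t) (retract u) (retract v).
Proof.
apply: weq_twisted_subst; last exact: retract_subst_rel.
by apply: word_deg_relS => k /andP[k_ge2 k_le] /=; lia.
Qed.

End Retract.

Lemma relS_descend (i j : 'I_m) (p' q : int) K u : (i < j)%N -> (j < K <= m)%N ->
  weq (relS K) u (pw (s i) p' ++ pw (s j) q) ->
  exists2 u', (size u' <= size u)%N & weq (relS j.+1) u' (pw (s i) p' ++ pw (s j) q).
Proof.
move=> ij; elim: K u => [|K IH] u /andP[jK Km] uw //.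
have [jE|jK'] := eqVneq K j; first by exists u; rewrite -?jE.
have m_gt0 : (0 < m)%N by lia.
have K1_lt : (K.-1 < m)%N by lia.
have := weq_retract (s0 := Ordinal m_gt0) (st1 := Ordinal K1_lt) erefl erefl _ uw.
rewrite retract_pw_cat; try lia.
case/(_ _)/IH => [||u' u'_le u'w]; try lia.
by exists u'; rewrite // (leq_trans u'_le) ?size_retract.
Qed.

Lemma relS_length_ge (i j : 'I_m) (p' q : int) u : (i < j)%N ->
  weq (relS j.+1) u (pw (s i) p' ++ pw (s j) q) -> (`|p'| + `|q| <= size u)%N.
Proof.
move=> ij uw.
have deg_eq P : (forall k, (2 <= k < j.+1)%N -> P 0%N = P k.-1) ->
    word_deg (sweight P) u = p' * (P i : nat)%:Z + q * (P j : nat)%:Z.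
  by move=> PE; rewrite (weq_word_deg (word_deg_relS PE) uw) word_deg_cat !word_deg_pw.
have deg_lt : word_deg (sweight (fun k => k < j)%N) u = p'.
  rewrite deg_eq => [|k /andP[k_ge2 k_le]]; first by rewrite ij ltnn mulr1 mulr0 addr0.
  by apply/idP/idP; lia.
have deg_j : word_deg (sweight (pred1 (j : nat))) u = q.
  rewrite deg_eq => [|k /andP[k_ge2 k_le] /=].
    by rewrite /= eqxx ltn_eqF // mulr0 mulr1 add0r.
  by apply/idP/idP; lia.
have norm_le1 (g : G) :
    `|sweight (fun k => k < j)%N g| + `|sweight (pred1 (j : nat)) g| <= 1.
  by case: g => //= a; case: ltngtP.
by have := word_deg_norm_le u norm_le1; rewrite deg_lt deg_j; lia.
Qed.

End SRelators.

Arguments sconj_rel {T p m}.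

Section SProjection.
Variables (T : finType) (RH : seq (word T)) (p : nat) (d : 'I_p -> T) (m : nat).

Lemma sproj_subst_map_GT h (r : word T) :
  twisted_subst (fun=> 0) (@sproj_subst T p m) h [seq (GT p m l.1, l.2) | l <- r] = [::].
Proof. by elim: r h => //= [[g b] r IH] h; rewrite IH /twisted_letter; case: b. Qed.

Lemma sproj_subst_rel r h : relG RH d r ->
  weq (relS m) (twisted_subst (fun=> 0) (@sproj_subst T p m) h r) [::].
Proof.
move=> rel_r; elim: rel_r h => [r' _||||||||||||||k k1 k0 k_ge2 k0E k1E] *;
  rewrite ?sproj_subst_map_GT /= /twisted_letter /winv /=; try exact: weq_refl;
  try exact: (@weq_free _ _ [::] [::] _ true).
have rel_k : @relS T p m m (sconj_rel k k0 k1).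
  by exists k, k0, k1; split => //; apply/andP; split; [exact: k_ge2 | exact: ltn_ord].
by have := weq_rel [::] [::] rel_k; rewrite cats0.
Qed.

Lemma weq_sproj u v : weq (@relG T RH p d m) u v -> weq (relS m) (sproj u) (sproj v).
Proof.
by apply: weq_twisted_subst => [r _|]; [apply: word_deg0 | apply: sproj_subst_rel].
Qed.

End SProjection.

Theorem lemma3p4 (T : finType) (RH : seq (word T)) (p : nat) (d : 'I_p -> T)
  (Hfree : free_basis RH d) (m : nat) (i j : 'I_m) (Hij : (i < j)%N)
  (p' q : int) :
  is_word_length (@relG T RH p d m)
    (pw (GS T p i) p' ++ pw (GS T p j) q) (`|p'|%N + `|q|%N).
Proof.
split.
  exists (pw (GS T p i) p' ++ pw (GS T p j) q); split; first exact: weq_refl.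
  by rewrite size_cat !size_nseq.
move=> u uw; have := weq_sproj uw; rewrite sproj_pw_cat.
case/(relS_descend Hij) => [|u' u'_le u'w]; first by rewrite ltn_ord leqnn.
exact: leq_trans (relS_length_ge Hij u'w) (leq_trans u'_le (size_sproj u)).
Qed.
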